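(* For $b\in B$ and $i\in I$, let $m=\varphi_i(b)$. Then for every $j\ge0$ and $\mu\in P$, $$\sum_{t=0}^m g_j(\tilde f_i^tb,\mu+t\alpha_i)\,q^{tj\delta_{0i}}=\sum_{t=0}^m g_j\bigl(\tilde f_i^tb,\ r_i(\mu+(m-t)\alpha_i)\bigr)\,q^{tj\delta_{0i}}.$$
   Context: Standing setup. $\mathfrak g$ is an affine Kac–Moody algebra with index set $I$ ($0$ the special node), Cartan matrix $(a_{ij})$, simple coroots $h_i$, fundamental weights $\Lambda_i$, null root $\delta$. $P=\bigoplus_{i\in I}\mathbb Z\Lambda_i\oplus\mathbb Z\delta$, $P_{cl}=\bigoplus_{i\in I}\mathbb Z\Lambda_i\subset P$, $cl:P\to P_{cl}$ the projection killing $\delta$. Simple roots are $\alpha_i=\sum_{j}a_{ji}\Lambda_j+\delta_{i0}\delta\in P$, $r_i(\mu)=\mu-\langle h_i,\mu\rangle\alpha_i$. For $\mu\in P$, $(\Lambda_0,\mu)$ denotes the coefficient of $\delta$ in $\mu$. Put $q=e^{-\delta}$. $B$ is a finite crystal with $wt:B\to P_{cl}$, Kashiwara operators $\tilde e_i,\tilde f_i$, $\varepsilon_i(b)=\max\{k:\tilde e_i^kb\ne0\}$, $\varphi_i(b)=\max\{k:\tilde f_i^kb\neq0\}$, $\varphi_i(b)-\varepsilon_i(b)=\langle h_i,wt\,b\rangle$, $wt(\tilde f_ib)=wt(b)-cl(\alpha_i)$. Tensor products: $wt$ is additive; $\tilde e_i(b_1\otimes b_2)=\tilde e_ib_1\otimes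 b_2$ if $\varphi_i(b_1)\ge\varepsilon_i(b_2)$ and $=b_1\otimes\tilde e_ib_2$ otherwise; $\tilde f_i(b_1\otimes b_2)=\tilde f_ib_1\otimes b_2$ if $\varphi_i(b_1)>\varepsilon_i(b_2)$ and $=b_1\otimes\tilde f_ib_2$ otherwise. An energy function is $H:B\otimes B\to\mathbb Z$ such that whenever $\tilde e_i(b\otimes b')\neq0$: $H(\tilde e_i(b\otimes b'))=H(b\otimes b')$ if $i\ne0$; $=H(b\otimes b')+1$ if $i=0$ and $\varphi_0(b)\ge\varepsilon_0(b')$; $=H(b\otimes b')-1$ if $i=0$ and $\varphi_0(b)<\varepsilon_0(b')$. For $j\ge0$, $b\in B$, $\mu\in P$: $\mathcal P_j(b,\mu)=\{b\otimes b_j\otimes\cdots\otimes b_1\in B^{\otimes(j+1)}:wt(b_j)+\cdots+wt(b_1)=cl(\mu)\}$, $E(b_{j+1}\otimes\cdots\otimes b_1)=\sum_{i=1}^j iH(b_{i+1}\otimes b_i)$, and $g_j(b,\mu)=q^{(\Lambda_0,\mu)}\sum_{p\in\mathcal P_j(b,\mu)}q^{E(p)}$. *)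

From HB Require Import structures.
From mathcomp Require Import all_boot all_order all_algebra.
Set Implicit Arguments. Unset Strict Implicit. Unset Printing Implicit Defensive.
Import Order.TTheory GRing.Theory Num.Theory.
Local Open Scope ring_scope.

(* The weight lattice P = (+)_i Z Lambda_i (+) Z delta, an element being
   (coefficients of the Lambda_i, coefficient of delta). *)
Notation wlat I := ({ffun I -> int} * int)%type.

Section Affine.
Variable I : finType.

(* Affine generalized Cartan matrix (a i j = a_{ij}): GCM conditions,
   indecomposability, and a positive null vector (Kac, Thm 4.3). *)
Definition affine_cartan (a : I -> I -> int) : Prop :=
  [/\ forall i, a i i = 2,
      forall i j, i != j -> a i j <= 0,
      forall i j, a i j = 0 <-> a j i = 0,
      (forall J : {set I}, J != set0 -> J != setT ->
          exists i, exists j, [/\ i \in J, j \notin J & a i j != 0])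
    & exists u : I -> nat, (forall i, (0 < u i)%N) /\
          (forall i, \sum_(k : I) a i k * (u k)%:Z = 0)].

Definition cl (mu : wlat I) : {ffun I -> int} := mu.1.
(* (Lambda_0, mu) = coefficient of delta *)
Definition delta_coef (mu : wlat I) : int := mu.2.
Definition pair_h (i : I) (mu : wlat I) : int := mu.1 i.
Definition alpha (i0 : I) (a : I -> I -> int) (i : I) : wlat I :=
  ([ffun j => a j i], if i == i0 then 1 else 0).
Definition refl (i0 : I) (a : I -> I -> int) (i : I) (mu : wlat I) : wlat I :=
  mu - alpha i0 a i *~ pair_h i mu.

Variable B : finType.

(* k-fold application of a partial Kashiwara operator (None = 0) *)
Definition kpow (op : I -> B -> option B) (i : I) (k : nat) (b : B) : option B :=
  iter k (obind (op i)) (Some b).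

Definition is_crystal (i0 : I) (a : I -> I -> int) (wt : B -> {ffun I -> int})
  (e f : I -> B -> option B) (eps phi : I -> B -> nat) : Prop :=
  [/\ forall i b b', f i b = Some b' <-> e i b' = Some b,
      forall i b b', f i b = Some b' -> wt b' = wt b - cl (alpha i0 a i),
      forall i b k, (k <= eps i b)%N <-> kpow e i k b <> None,
      forall i b k, (k <= phi i b)%N <-> kpow f i k b <> None
    & forall i b, (phi i b)%:Z - (eps i b)%:Z = wt b i].

Definition e2 (e : I -> B -> option B) (eps phi : I -> B -> nat) (i : I)
  (b1 b2 : B) : option (B * B) :=
  if (eps i b2 <= phi i b1)%N then omap (fun x => (x, b2)) (e i b1)
  else omap (fun x => (b1, x)) (e i b2).

Definition energy_function (i0 : I) (e : I -> B -> option B)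
  (eps phi : I -> B -> nat) (H : B -> B -> int) : Prop :=
  forall i b b' p, e2 e eps phi i b b' = Some p ->
    H p.1 p.2 = H b b' +
      (if i == i0 then (if (eps i b' <= phi i b)%N then 1 else -1) else 0).

(* for s = (b_1, ..., b_j) (s k = b_{k+1}) and b = b_{j+1}:
   the (nat-indexed from 0) chain c_k = b_{k+1}, c_j = b *)
Definition chain (j : nat) (s : {ffun 'I_j -> B}) (b : B) (n : nat) : B :=
  if insub n is Some k then s k else b.

Definition energyE (H : B -> B -> int) (j : nat) (b : B)
  (s : {ffun 'I_j -> B}) : int :=
  \sum_(k < j) (k.+1)%:Z * H (chain s b k.+1) (chain s b k).

Definition gfun (R : unitRingType) (q : R) (wt : B -> {ffun I -> int})
  (H : B -> B -> int) (j : nat) (b : B) (mu : wlat I) : R :=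
  q ^ delta_coef mu *
  \sum_(s : {ffun 'I_j -> B} | \sum_(k < j) wt (s k) == cl mu) q ^ energyE H b s.

Definition gopt (R : unitRingType) (q : R) (wt : B -> {ffun I -> int})
  (H : B -> B -> int) (j : nat) (ob : option B) (mu : wlat I) : R :=
  if ob is Some b then gfun q wt H j b mu else 0.

End Affine.

(* The formal variable q = e^{-delta}, in the field of rational functions
   Q(q) ⊇ Z[q, q^-1] *)
Definition LaurentF := {fraction {poly int}}.
Definition qvar : LaurentF := FracField.tofrac ('X : {poly int}).

(* Both sides are sums over the tensors f_i^t b (x) b_j (x) ... (x) b_1 of B^(j+1),
   0 <= t <= phi_i(b).  Extend the i-string structure to tensor powers by the
   signature rule and reflect the i-string of such a tensor c about its part of
   height eps >= eps_i(b): c goes to f_i^k c, or to e_i^(-k) c if k < 0, where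
   k = <h_i, wt c> + eps_i(b).  The leading factor stays in the f_i-string of b,
   so this is an involution of the index set.  It acts on weights by
   lam |-> lam - (<h_i, lam> + eps_i(b)) alpha_i, which exchanges the weight
   conditions of the two sides, and since E(c) + delta_{i0} (j+1) eps_i(leading
   factor) grows by exactly delta_{i0} at each f_i-step, it also matches the
   powers of q term by term. *)

From HB Require Import structures.
From mathcomp Require Import all_boot all_order all_algebra.
From mathcomp Require Import zify ring.
Set Implicit Arguments. Unset Strict Implicit. Unset Printing Implicit Defensive.
Import Order.TTheory GRing.Theory Num.Theory.
Local Open Scope ring_scope.

Definition iter_opt (T : Type) (g : T -> option T) (k : nat) (x : T) : option T :=
  iter k (obind g) (Some x).

Lemma kpowE (I B : finType) (op : I -> B -> option B) i k x :
  kpow op i k x = iter_opt (op i) k x.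
Proof. by []. Qed.

Lemma kpowS (I B : finType) (op : I -> B -> option B) i k x :
  kpow op i k.+1 x = obind (op i) (kpow op i k x).
Proof. by []. Qed.

Section OptionIteration.
Variables (T : Type) (g : T -> option T).

Lemma iter_optSr k x y : g x = Some y -> iter_opt g k.+1 x = iter_opt g k y.
Proof. by move=> gx; rewrite /iter_opt iterSr /= gx. Qed.

Lemma iter_opt_add (V : nmodType) (w : T -> V) (v : V) :
  (forall x y, g x = Some y -> w y = w x + v) ->
  forall k x y, iter_opt g k x = Some y -> w y = w x + v *+ k.
Proof.
move=> wg; elim=> [|k IH] x y; first by case=> <-; rewrite addr0.
rewrite /iter_opt iterS -/(iter_opt g k x).
case hz: (iter_opt g k x) => [z|] //= /wg ->.
by rewrite (IH _ _ hz) mulrSr addrA.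
Qed.

Lemma iter_opt_stable (P Q : T -> Prop) :
  (forall x y, g x = Some y -> Q y -> Q x) ->
  (forall x y, P x -> g x = Some y -> Q y -> P y) ->
  forall k x y, P x -> iter_opt g k x = Some y -> Q y -> P y.
Proof.
move=> Qg Pg; elim=> [|k IH] x y Px; first by case=> <-.
rewrite /iter_opt iterS -/(iter_opt g k x).
case hz: (iter_opt g k x) => [z|] //= gz Qy.
by apply: (Pg z) => //; apply: (IH x z Px hz); exact: Qg gz Qy.
Qed.

Lemma iter_opt_count (n : T -> nat) :
  (forall x k, (k <= n x)%N <-> iter_opt g k x <> None) ->
  forall x y, g x = Some y -> n x = (n y).+1.
Proof.
move=> hn x y gxy.
have succ_le k : (k.+1 <= n x)%N <-> (k <= n y)%N by rewrite !hn (iter_optSr _ gxy).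
have := proj2 (succ_le (n y)) (leqnn _).
have := proj1 (succ_le (n x).-1); have := proj2 (succ_le 0%N) isT; lia.
Qed.

End OptionIteration.

Lemma iter_opt_inv (T : Type) (g h : T -> option T) :
  (forall x y, g x = Some y <-> h y = Some x) ->
  forall k x y, iter_opt g k x = Some y -> iter_opt h k y = Some x.
Proof.
move=> gh; elim=> [|k IH] x y; first by case=> ->.
rewrite [iter_opt g _ _]/iter_opt iterS -/(iter_opt g k x).
case hz: (iter_opt g k x) => [z|] //= /gh hy.
by change (iter_opt h k.+1 y = Some x); rewrite (iter_optSr _ hy) (IH _ _ hz).
Qed.

Definition string_axioms (T : Type) (fs es : T -> option T) (ep ph : T -> nat) :=
  [/\ forall x y, fs x = Some y <-> es y = Some x,
      forall x y, fs x = Some y -> ep y = (ep x).+1,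
      forall x y, es x = Some y -> ph y = (ph x).+1,
      forall x, (0 < ph x)%N -> fs x <> None
    & forall x, (0 < ep x)%N -> es x <> None].

Lemma string_axioms_dual (T : Type) (fs es : T -> option T) (ep ph : T -> nat) :
  string_axioms fs es ep ph -> string_axioms es fs ph ep.
Proof. by case=> fe; split=> // x y; rewrite fe. Qed.

Section Strings.
Variables (T : Type) (fs es : T -> option T) (ep ph : T -> nat).
Hypothesis str : string_axioms fs es ep ph.

Lemma string_fe x y : fs x = Some y <-> es y = Some x.
Proof. by case: str. Qed.

Lemma string_f_eps x y : fs x = Some y -> ep y = (ep x).+1.
Proof. by case: str => _ h _ _ _ /h. Qed.

Lemma string_f_phi x y : fs x = Some y -> ph x = (ph y).+1.
Proof. by case: str => _ _ h _ _ /string_fe /h. Qed.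

Lemma iter_string_f k x : (k <= ph x)%N -> exists y, iter_opt fs k x = Some y.
Proof.
elim: k x => [|k IH] x hk; first by exists x.
case hx: (fs x) => [x1|]; last first.
  by case: str => _ _ _ /(_ x) hf _; case: hf; [lia | rewrite hx].
have := string_f_phi hx; rewrite (iter_optSr _ hx) => ph1.
by apply: IH; lia.
Qed.

End Strings.

Lemma iter_string_e (T : Type) (fs es : T -> option T) (ep ph : T -> nat) :
  string_axioms fs es ep ph ->
  forall k x, (k <= ep x)%N -> exists y, iter_opt es k x = Some y.
Proof. by move/string_axioms_dual/iter_string_f. Qed.

Section Reflection.
Variables (T : Type) (fs es : T -> option T) (ep ph : T -> nat).
Hypothesis str : string_axioms fs es ep ph.
Variable s : nat.

(* On the part of the string through x where ep >= s, the reflection of heights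
   p |-> ep x + ph x + s - p; string_shift x is its signed number of fs-steps. *)
Definition string_shift x : int := (ph x)%:Z - (ep x)%:Z + s%:Z.

Definition sreflect x : T :=
  odflt x (match string_shift x with
           | Posz k => iter_opt fs k x
           | Negz k => iter_opt es k.+1 x end).

Lemma sreflect_pos x k :
  string_shift x = k%:Z -> sreflect x = odflt x (iter_opt fs k x).
Proof. by rewrite /sreflect => ->. Qed.

Lemma sreflect_neg x k :
  string_shift x = - k.+1%:Z -> sreflect x = odflt x (iter_opt es k.+1 x).
Proof. by rewrite /sreflect -NegzE => ->. Qed.

Lemma sreflect_cases x : (s <= ep x)%N ->
  (exists k, [/\ string_shift x = k%:Z, iter_opt fs k x = Some (sreflect x)
                & iter_opt es k (sreflect x) = Some x]) \/
  (exists k, [/\ string_shift x = - k%:Z, iter_opt es k x = Some (sreflect x)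
                & iter_opt fs k (sreflect x) = Some x]).
Proof.
move=> hs; rewrite /sreflect; case hd: (string_shift x) => [k|k].
  have [|y hy] := iter_string_f str (k := k) (x := x).
    by move: hd; rewrite /string_shift; lia.
  left; exists k; rewrite hy; split=> //.
  exact: iter_opt_inv (string_fe str) _ _ _ hy.
have [|y hy] := iter_string_e str (k := k.+1) (x := x).
  by move: hd; rewrite /string_shift; lia.
right; exists k.+1; rewrite hy NegzE; split=> //.
by apply: iter_opt_inv hy => u v; rewrite (string_fe str).
Qed.

Lemma sreflect_add (V : zmodType) (w : T -> V) (v : V) x :
  (forall x y, fs x = Some y -> w y = w x + v) -> (s <= ep x)%N ->
  w (sreflect x) = w x + v *~ string_shift x.
Proof.
move=> wf /sreflect_cases [[k [-> hf _]] | [k [-> _ hf]]].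
  by rewrite (iter_opt_add wf hf).
by rewrite (iter_opt_add wf hf) mulrNz addrK.
Qed.

Lemma sreflect_eps x :
  (s <= ep x)%N -> (ep (sreflect x))%:Z = (ep x)%:Z + string_shift x.
Proof.
have epf u v : fs u = Some v -> (ep v)%:Z = (ep u)%:Z + 1.
  by move/(string_f_eps str) ->; rewrite -addn1.
by move=> hs; rewrite (sreflect_add epf hs) mulrzz mul1r.
Qed.

Lemma sreflect_phi x :
  (s <= ep x)%N -> (ph (sreflect x))%:Z = (ph x)%:Z - string_shift x.
Proof.
have phf u v : fs u = Some v -> (ph v)%:Z = (ph u)%:Z + (-1).
  by move/(string_f_phi str) ->; rewrite -addn1 PoszD addrK.
by move=> hs; rewrite (sreflect_add phf hs) mulrzz mulN1r.
Qed.

Lemma string_shift_sreflect x :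
  (s <= ep x)%N -> string_shift (sreflect x) = - string_shift x.
Proof.
move=> hs; rewrite {1}/string_shift sreflect_eps // sreflect_phi //.
by rewrite /string_shift; ring.
Qed.

Lemma sreflect_eps_ge x : (s <= ep x)%N -> (s <= ep (sreflect x))%N.
Proof. by move=> hs; have := sreflect_eps hs; rewrite /string_shift; lia. Qed.

Lemma sreflectK x : (s <= ep x)%N -> sreflect (sreflect x) = x.
Proof.
move=> hs; have hy := string_shift_sreflect hs.
case: (sreflect_cases hs) => [[[|k] [hd hf he]] | [k [hd he hf]]].
- by have sx : sreflect x = x := sreflect_pos hd; rewrite !sx.
- by rewrite (sreflect_neg (etrans hy (congr1 _ hd))) he.
- by rewrite (@sreflect_pos _ k) ?hf // hy hd opprK.
Qed.

Lemma sreflect_inv (P : T -> Prop) x :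
  (forall x y, P x -> fs x = Some y -> P y) ->
  (forall x y, P x -> es x = Some y -> (s <= ep y)%N -> P y) ->
  (s <= ep x)%N -> P x -> P (sreflect x).
Proof.
move=> Pf Pe hs Px.
case: (sreflect_cases hs) => [[k [_ hf _]] | [k [_ he _]]].
  by apply: (iter_opt_stable (Q := fun _ => True) _ _ Px hf) => // u v Pu /(Pf _ _ Pu).
apply: (iter_opt_stable (Q := fun y => (s <= ep y)%N) _ Pe Px he (sreflect_eps_ge hs)).
by move=> u v /(string_fe str) /(string_f_eps str); lia.
Qed.

End Reflection.

Section TensorPower.
Variables (T : Type) (fb eb : T -> option T) (epb phb : T -> nat).

(* [:: x1; x2; ...; xn] stands for x1 (x) x2 (x) ... (x) xn; every operation
   applies the tensor product rule to x1 (x) (x2 (x) ... (x) xn). *)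
Fixpoint tens_eps (c : seq T) : nat :=
  if c is x :: r then (epb x + (tens_eps r - phb x))%N else 0%N.

Fixpoint tens_phi (c : seq T) : nat :=
  if c is x :: r then (tens_phi r + (phb x - tens_eps r))%N else 0%N.

Fixpoint tens_f (c : seq T) : option (seq T) :=
  if c is x :: r then
    if (tens_eps r < phb x)%N then omap (cons^~ r) (fb x) else omap (cons x) (tens_f r)
  else None.

Fixpoint tens_e (c : seq T) : option (seq T) :=
  if c is x :: r then
    if (tens_eps r <= phb x)%N then omap (cons^~ r) (eb x) else omap (cons x) (tens_e r)
  else None.

Hypothesis str : string_axioms fb eb epb phb.

Lemma tens_f_shift c c' : tens_f c = Some c' ->
  tens_eps c' = (tens_eps c).+1 /\ tens_phi c = (tens_phi c').+1.
Proof.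
elim: c c' => [//|x r IH] c' /=; case: ltnP => hr.
  case hx: (fb x) => [x'|] //= [<-] /=.
  by have := string_f_eps str hx; have := string_f_phi str hx; lia.
case hr': (tens_f r) => [r'|] //= [<-] /=.
by have := IH _ hr'; lia.
Qed.

Lemma tens_e_shift c c' : tens_e c = Some c' ->
  tens_eps c = (tens_eps c').+1 /\ tens_phi c' = (tens_phi c).+1.
Proof.
elim: c c' => [//|x r IH] c' /=; case: leqP => hr.
  case hx: (eb x) => [x'|] //= [<-] /=.
  have fx' := proj2 (string_fe str _ _) hx.
  by have := string_f_eps str fx'; have := string_f_phi str fx'; lia.
case hr': (tens_e r) => [r'|] //= [<-] /=.
by have := IH _ hr'; lia.
Qed.

Lemma tens_fK c c' : tens_f c = Some c' -> tens_e c' = Some c.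
Proof.
elim: c c' => [//|x r IH] c' /=; case: ltnP => hr.
  case hx: (fb x) => [x'|] //= [<-] /=.
  have := string_f_phi str hx => phx.
  by rewrite ifT ?(proj1 (string_fe str _ _) hx) //; lia.
case hr': (tens_f r) => [r'|] //= [<-] /=.
by have := tens_f_shift hr' => sh; rewrite ifF ?(IH _ hr') //; lia.
Qed.

Lemma tens_eK c c' : tens_e c = Some c' -> tens_f c' = Some c.
Proof.
elim: c c' => [//|x r IH] c' /=; case: leqP => hr.
  case hx: (eb x) => [x'|] //= [<-] /=.
  have fx' := proj2 (string_fe str _ _) hx.
  by have := string_f_phi str fx' => phx; rewrite ifT ?fx' //; lia.
case hr': (tens_e r) => [r'|] //= [<-] /=.
by have := tens_e_shift hr' => sh; rewrite ifF ?(IH _ hr') //; lia.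
Qed.

Lemma string_axioms_tens : string_axioms tens_f tens_e tens_eps tens_phi.
Proof.
case: str => _ _ _ fb_some eb_some; split.
- by move=> c c'; split; [apply: tens_fK | apply: tens_eK].
- by move=> c c' /tens_f_shift[].
- by move=> c c' /tens_e_shift[].
- elim=> [//|x r IH] /= hpos; case: ltnP => hr.
    by case: (fb x) (fb_some x) => [//|/= hf _]; apply: hf => //; lia.
  by case: (tens_f r) IH => [//|/= IH _]; apply: IH => //; lia.
- elim=> [//|x r IH] /= hpos; case: leqP => hr.
    by case: (eb x) (eb_some x) => [//|/= hf _]; apply: hf => //; lia.
  by case: (tens_e r) IH => [//|/= IH _]; apply: IH => //; lia.
Qed.

Lemma tens_f_sum (V : nmodType) (w : T -> V) (v : V) :
  (forall x y, fb x = Some y -> w y = w x + v) ->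
  forall c c', tens_f c = Some c' -> \sum_(x <- c') w x = \sum_(x <- c) w x + v.
Proof.
move=> wf; elim=> [//|x r IH] c' /=; case: ltnP => _.
  by case hx: (fb x) => [x'|] //= [<-]; rewrite !big_cons (wf _ _ hx) addrAC.
by case hr: (tens_f r) => [r'|] //= [<-]; rewrite !big_cons (IH _ hr) addrA.
Qed.

Lemma tens_f_size c c' : tens_f c = Some c' -> size c' = size c.
Proof.
move/(tens_f_sum (w := fun=> 1%N) (v := 0%N) (fun _ _ _ => erefl)).
by rewrite addr0 !sum1_size.
Qed.

Lemma tens_phi_sub_eps (w : T -> int) :
  (forall x, (phb x)%:Z - (epb x)%:Z = w x) ->
  forall c, (tens_phi c)%:Z - (tens_eps c)%:Z = \sum_(x <- c) w x.
Proof.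
move=> hw; elim=> [|x r IH] /=; first by rewrite big_nil.
by rewrite big_cons -hw -IH; lia.
Qed.

Variables (H : T -> T -> int) (d : int).
Hypothesis energy_left : forall x x' y,
  eb x' = Some x -> (epb y <= phb x')%N -> H x y = H x' y + d.
Hypothesis energy_right : forall x y y',
  eb y' = Some y -> (phb x < epb y')%N -> H x y = H x y' - d.

Fixpoint tens_energy (c : seq T) : int :=
  if c is x :: r then (if r is y :: _ then (size r)%:Z * H x y else 0) + tens_energy r
  else 0.

Lemma tens_energy_cons2 x y r :
  tens_energy [:: x, y & r] = (size r).+1%:Z * H x y + tens_energy (y :: r).
Proof. by []. Qed.

Definition lead_eps (c : seq T) : nat := if c is x :: _ then epb x else 0%N.

(* When fb acts on the leading factor of c the energy drops by (size c - 1) * d,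
   otherwise it grows by d; the correction term makes the increment d in both
   cases. *)
Definition tens_potential (c : seq T) : int :=
  tens_energy c + d * (size c * lead_eps c)%N%:Z.

Lemma tens_potential_f c c' :
  tens_f c = Some c' -> tens_potential c' = tens_potential c + d.
Proof.
rewrite /tens_potential; elim: c c' => [//|x r IH] c' /=; case: ltnP => hr.
  case hx: (fb x) => [x'|] //= [<-] /=.
  have ex' := proj1 (string_fe str _ _) hx; rewrite (string_f_eps str hx).
  case: r hr {IH} => [|y t] /= hr; first by lia.
  rewrite (energy_left (y := y) ex'); first by lia.
  by have := string_f_phi str hx; lia.
case hr': (tens_f r) => [r'|] //= [<-] /=.
have /= := IH _ hr'; rewrite (tens_f_size hr').
case: r hr hr' {IH} => [//|y t] /=; case: ltnP => ht.
  case hy: (fb y) => [y'|] //= hr [<-] /=; rewrite (string_f_eps str hy).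
  rewrite (energy_right (x := x) (proj1 (string_fe str _ _) hy)); first by lia.
  by rewrite (string_f_eps str hy); lia.
by case: (tens_f t) => [t'|] //= hr [<-] /=; lia.
Qed.

Lemma tens_energy_rev x p : tens_energy (x :: rev p) =
  \sum_(k < size p) (k.+1)%:Z * H (nth x p k.+1) (nth x p k).
Proof.
elim/last_ind: p x => [|p y IH] x; first by rewrite big_ord0.
have nthE n : (n <= size p)%N -> nth x (rcons p y) n = nth y p n.
  rewrite nth_rcons leq_eqVlt => /orP[/eqP ->|lt].
    by rewrite ltnn eqxx nth_default.
  by rewrite lt (set_nth_default y).
rewrite rev_rcons tens_energy_cons2 IH size_rcons big_ord_recr size_rev addrC.
rewrite [nth x _ (size p).+1]nth_default ?size_rcons // nthE // nth_default //.
by congr (_ + _); apply: eq_bigr => k _; rewrite /= !nthE // ltnW.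
Qed.

End TensorPower.

Section WeightLattice.
Variables (I : finType) (i0 : I) (a : I -> I -> int) (i : I).

Local Notation alpha_i := (alpha i0 a i).

Lemma cl_shift (mu : wlat I) (z : int) :
  cl (mu + alpha_i *~ z) = cl mu + cl alpha_i *~ z.
Proof. by rewrite /cl /= (raddfMz fst). Qed.

Lemma delta_coef_shift (mu : wlat I) (z : int) :
  delta_coef (mu + alpha_i *~ z) = delta_coef mu + (i == i0)%:Z * z.
Proof. by rewrite /delta_coef /= (raddfMz snd) /= mulrzz; case: (i == i0). Qed.

Lemma cl_refl (mu : wlat I) : cl (refl i0 a i mu) = cl mu - cl alpha_i *~ cl mu i.
Proof. by rewrite /refl /cl /pair_h /= (raddfMz fst). Qed.

Lemma delta_coef_refl (mu : wlat I) :
  delta_coef (refl i0 a i mu) = delta_coef mu - (i == i0)%:Z * cl mu i.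
Proof.
by rewrite /refl /delta_coef /pair_h /cl /= (raddfMz snd) /= mulrzz; case: (i == i0).
Qed.

End WeightLattice.

Lemma qvar_neq0 : qvar != 0.
Proof. by rewrite tofrac_eq0 polyX_eq0. Qed.

Section CrystalStrings.
Variables (I : finType) (i0 : I) (a : I -> I -> int) (B : finType)
  (wt : B -> {ffun I -> int}) (e f : I -> B -> option B) (eps phi : I -> B -> nat)
  (H : B -> B -> int).
Hypothesis crys : is_crystal i0 a wt e f eps phi.
Hypothesis energy : energy_function i0 e eps phi H.

Lemma crystal_string i : string_axioms (f i) (e i) (eps i) (phi i).
Proof.
case: crys => fe _ eps_iter phi_iter _; split=> // [x y | x y | x | x].
- by move/fe; apply: (iter_opt_count (eps_iter i)).
- by move/fe; apply: (iter_opt_count (phi_iter i)).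
- by move/(phi_iter i x 1%N).
- by move/(eps_iter i x 1%N).
Qed.

Lemma crystal_f_wt i x y : f i x = Some y -> wt y = wt x + - cl (alpha i0 a i).
Proof. by case: crys => _ h _ _ _ /h. Qed.

Lemma crystal_phi_sub_eps i x : (phi i x)%:Z - (eps i x)%:Z = wt x i.
Proof. by case: crys => _ _ _ _; apply. Qed.

Lemma energy_left i x x' y : e i x' = Some x -> (eps i y <= phi i x')%N ->
  H x y = H x' y + (i == i0)%:Z.
Proof.
move=> ex' hy; have := energy (p := (x, y)) (b := x') (b' := y) (i := i).
by rewrite /e2 hy ex' => /(_ erefl) ->; case: (i == i0).
Qed.

Lemma energy_right i x y y' : e i y' = Some y -> (phi i x < eps i y')%N ->
  H x y = H x y' - (i == i0)%:Z.
Proof.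
move=> ey' hx; have := energy (p := (x, y)) (b := x) (b' := y') (i := i).
by rewrite /e2 leqNgt hx ey' => /(_ erefl) ->; case: (i == i0).
Qed.

End CrystalStrings.

Section Symmetry.
Variables (I : finType) (i0 : I) (a : I -> I -> int) (B : finType)
  (wt : B -> {ffun I -> int}) (e f : I -> B -> option B) (eps phi : I -> B -> nat)
  (H : B -> B -> int).
Hypothesis crys : is_crystal i0 a wt e f eps phi.
Hypothesis energy : energy_function i0 e eps phi H.
Variables (i : I) (b : B) (j : nat).
Hypothesis a_ii : a i i = 2.

Local Notation m := (phi i b).
Local Notation alpha_i := (cl (alpha i0 a i)).
Local Notation delta_i0 := ((i == i0)%:Z).
Local Notation str := (crystal_string crys i).
Local Notation tstr := (string_axioms_tens str).
Local Notation tf := (tens_f (f i) (eps i) (phi i)).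
Local Notation te := (tens_e (e i) (eps i) (phi i)).
Local Notation teps := (tens_eps (eps i) (phi i)).
Local Notation tphi := (tens_phi (eps i) (phi i)).
Local Notation tshift := (string_shift teps tphi (eps i b)).
Local Notation srefl := (sreflect tf te teps tphi (eps i b)).
Local Notation tpot := (tens_potential (eps i) H delta_i0).

Lemma kpow_eps t x : kpow f i t b = Some x -> eps i x = (eps i b + t)%N.
Proof.
have epsf u v : f i u = Some v -> eps i v = (eps i u + 1)%N.
  by move/(string_f_eps str); rewrite addn1.
by move/(iter_opt_add epsf); rewrite natn.
Qed.

Lemma kpow_wt t x : kpow f i t b = Some x -> wt x = wt b - alpha_i *+ t.
Proof. by move/(iter_opt_add (crystal_f_wt crys (i := i))); rewrite mulNrn. Qed.

Lemma kpow_le t x : kpow f i t b = Some x -> (t <= m)%N.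
Proof. by case: crys => _ _ _ phi_iter _ hx; apply/phi_iter; rewrite hx. Qed.

Definition string_elt (t : nat) : B := odflt b (kpow f i t b).

Lemma string_elt_ord (t : 'I_m.+1) : kpow f i t b = Some (string_elt t).
Proof.
rewrite /string_elt kpowE.
by have [|x ->] // := iter_string_f str (k := t) (x := b); rewrite -ltnS.
Qed.

Definition term_index := ('I_m.+1 * {ffun 'I_j -> B})%type.

Definition tensor_of (y : term_index) : seq B := string_elt y.1 :: rev (codom y.2).

Definition of_tensor (c : seq B) : term_index :=
  (inord (lead_eps (eps i) c - eps i b), [ffun k : 'I_j => nth b (rev (behead c)) k]).

Definition admissible (c : seq B) : Prop :=
  size c = j.+1 /\ exists t, kpow f i t b = Some (head b c).

Definition sigma (y : term_index) : term_index := of_tensor (srefl (tensor_of y)).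

Lemma chain_codom (s : {ffun 'I_j -> B}) x n : chain s x n = nth x (codom s) n.
Proof.
rewrite /chain; case: insubP => [k _ <- | /negbTE hn].
  rewrite codomE (nth_map k) ?size_enum_ord ?ltn_ord //.
  by congr (s _); apply: val_inj; rewrite /= nth_enum_ord.
by rewrite nth_default // size_codom card_ord leqNgt hn.
Qed.

Lemma energyE_tensor x (s : {ffun 'I_j -> B}) :
  energyE H x s = tens_energy H (x :: rev (codom s)).
Proof.
rewrite tens_energy_rev size_codom card_ord; apply: eq_bigr => k _.
by rewrite !chain_codom.
Qed.

Lemma tensor_ofK : cancel tensor_of of_tensor.
Proof.
case=> t s; rewrite /of_tensor /= (kpow_eps (string_elt_ord t)) addKn inord_val.
by congr (_, _); apply/ffunP => k; rewrite ffunE revK -chain_codom /chain valK.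
Qed.

Lemma admissible_tensor_of y : admissible (tensor_of y).
Proof.
split; first by rewrite /= size_rev size_codom card_ord.
by exists y.1; rewrite (string_elt_ord _).
Qed.

Lemma of_tensorK c : admissible c -> tensor_of (of_tensor c) = c.
Proof.
case: c => [[]//|x r] [/= [size_r] [t ht]].
rewrite /tensor_of /of_tensor /= (kpow_eps ht) addKn inordK ?ltnS ?(kpow_le ht) //.
rewrite /string_elt ht /=; congr (_ :: _).
apply: (canLR revK).
rewrite codomE -[RHS](mkseq_nth b) size_rev size_r /mkseq -val_enum_ord -map_comp.
by apply: eq_map => k; rewrite /= ffunE.
Qed.

Lemma admissible_eps c : admissible c -> (eps i b <= teps c)%N.
Proof. by case: c => [[]//|x r] [_ [t /kpow_eps /= ->]]; lia. Qed.

Lemma admissible_f c c' : admissible c -> tf c = Some c' -> admissible c'.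
Proof.
move=> [size_c [t ht]] hc; split; first by rewrite (tens_f_size hc).
case: c hc ht {size_c} => [//|x r] /=; case: ltnP => _.
  by case hx: (f i x) => [x'|] //= [<-] ht; exists t.+1; rewrite kpowS ht.
by case: (tf r) => [r'|] //= [<-] ht; exists t.
Qed.

Lemma admissible_e c c' :
  admissible c -> te c = Some c' -> (eps i b <= teps c')%N -> admissible c'.
Proof.
move=> [size_c [t ht]] hc hc'; split.
  by rewrite -size_c (tens_f_size (tens_eK str hc)).
case: c hc ht {size_c} hc' => [//|x r] /=; case: leqP => hr.
  case hx: (e i x) => [x'|] //= [<-] ht /=.
  have fx' := proj2 (string_fe str _ _) hx; have := string_f_phi str fx'.
  have := string_f_eps str fx'; have := kpow_eps ht.
  case: t ht => [|t] ht; first by lia.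
  move: ht; rewrite kpowS; case hz: (kpow f i t b) => [z|] //= fz _ _ _ _.
  by exists t; rewrite hz; move: fz; rewrite (string_fe str) hx => -[->].
by case: (te r) => [r'|] //= [<-] ht; exists t.
Qed.

Lemma admissible_srefl c : admissible c -> admissible (srefl c).
Proof.
move=> hc; apply: (sreflect_inv tstr _ _ (admissible_eps hc) hc).
  exact: admissible_f.
exact: admissible_e.
Qed.

Lemma tensor_of_sigma y : tensor_of (sigma y) = srefl (tensor_of y).
Proof. exact: of_tensorK (admissible_srefl (admissible_tensor_of y)). Qed.

Lemma sigmaK : involutive sigma.
Proof.
move=> y; rewrite {1}/sigma tensor_of_sigma (sreflectK tstr) ?tensor_ofK //.
exact: admissible_eps (admissible_tensor_of y).
Qed.

Definition weight_refl (lam : {ffun I -> int}) : {ffun I -> int} :=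
  lam - alpha_i *~ (lam i + (eps i b)%:Z).

Lemma weight_reflK : involutive weight_refl.
Proof.
move=> lam; apply/ffunP => x.
by rewrite /weight_refl !(ffunE, ffunMzE) a_ii !mulrzz; ring.
Qed.

Lemma string_shift_weight c : tshift c = (\sum_(x <- c) wt x) i + (eps i b)%:Z.
Proof.
by rewrite /string_shift (tens_phi_sub_eps (crystal_phi_sub_eps crys i)) sum_ffunE.
Qed.

Lemma weight_srefl c : (eps i b <= teps c)%N ->
  \sum_(x <- srefl c) wt x = weight_refl (\sum_(x <- c) wt x).
Proof.
move=> hc.
have wf := tens_f_sum (epb := eps i) (phb := phi i) (crystal_f_wt crys (i := i)).
by rewrite (sreflect_add tstr wf hc) string_shift_weight mulNrz.
Qed.

Lemma potential_srefl c : (eps i b <= teps c)%N ->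
  tpot (srefl c) = tpot c + delta_i0 * tshift c.
Proof.
move=> hc; have potf := tens_potential_f str
  (energy_left energy (i := i)) (energy_right energy (i := i)).
by rewrite (sreflect_add tstr potf hc) mulrzz mulrC.
Qed.

Lemma weight_tensor_of y :
  \sum_(x <- tensor_of y) wt x = \sum_(k < j) wt (y.2 k) + (wt b - alpha_i *+ y.1).
Proof.
by rewrite big_cons big_rev codomE enumT big_map addrC (kpow_wt (string_elt_ord _)).
Qed.

Lemma potential_tensor_of y : tpot (tensor_of y) =
  energyE H (string_elt y.1) y.2 + delta_i0 * (j.+1 * (eps i b + y.1))%N%:Z.
Proof.
rewrite /tens_potential energyE_tensor /= size_rev size_codom card_ord.
by rewrite (kpow_eps (string_elt_ord _)).
Qed.

Lemma weight_condL (mu : wlat I) (y : term_index) :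
  (\sum_(k < j) wt (y.2 k) == cl (mu + alpha i0 a i *~ (y.1)%:Z)) =
  (\sum_(x <- tensor_of y) wt x == cl mu + wt b).
Proof.
rewrite weight_tensor_of cl_shift -(inj_eq (addIr (wt b - alpha_i *+ y.1))).
by rewrite pmulrn addrACA subrr addr0.
Qed.

Lemma weight_condR (mu : wlat I) (y : term_index) :
  (\sum_(k < j) wt (y.2 k)
     == cl (refl i0 a i (mu + alpha i0 a i *~ (m%:Z - (y.1)%:Z)))) =
  (\sum_(x <- tensor_of y) wt x == weight_refl (cl mu + wt b)).
Proof.
rewrite weight_tensor_of -(inj_eq (addIr (wt b - alpha_i *+ y.1))); congr (_ == _).
apply/ffunP => x; rewrite cl_refl cl_shift /weight_refl !(ffunE, ffunMzE, ffunMnE).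
by rewrite -(crystal_phi_sub_eps crys i b) a_ii pmulrn !mulrzz; ring.
Qed.

Lemma exponentL (mu : wlat I) (y : term_index) :
  delta_coef (mu + alpha i0 a i *~ (y.1)%:Z) + energyE H (string_elt y.1) y.2
    + (y.1 * j * (i == i0))%N%:Z
  = delta_coef mu + tpot (tensor_of y) - delta_i0 * (j.+1 * eps i b)%N%:Z.
Proof. by rewrite potential_tensor_of delta_coef_shift; ring. Qed.

Lemma exponentR (mu : wlat I) (y : term_index) :
  delta_coef (refl i0 a i (mu + alpha i0 a i *~ (m%:Z - (y.1)%:Z)))
    + energyE H (string_elt y.1) y.2 + (y.1 * j * (i == i0))%N%:Z
  = delta_coef mu - delta_i0 * (cl mu i + m%:Z) + tpot (tensor_of y)
    - delta_i0 * (j.+1 * eps i b)%N%:Z.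
Proof.
rewrite potential_tensor_of delta_coef_refl delta_coef_shift cl_shift.
by rewrite !(ffunE, ffunMzE) a_ii mulrzz; ring.
Qed.

Definition term (nu : nat -> wlat I) (y : term_index) : LaurentF :=
  if \sum_(k < j) wt (y.2 k) == cl (nu y.1)
  then qvar ^ (delta_coef (nu y.1) + energyE H (string_elt y.1) y.2
               + (y.1 * j * (i == i0))%N%:Z)
  else 0.

Lemma sum_gopt_term (nu : nat -> wlat I) :
  \sum_(t < m.+1) gopt qvar wt H j (kpow f i t b) (nu t) * qvar ^+ (t * j * (i == i0))
  = \sum_(y : term_index) term nu y.
Proof.
rewrite -(pair_bigA _ (fun t s => term nu (t, s))); apply: eq_bigr => t _.
rewrite (string_elt_ord t) /gopt /gfun big_mkcond mulr_sumr mulr_suml.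
apply: eq_bigr => s _; rewrite /term /=; case: ifP => _; last by rewrite mulr0 mul0r.
by rewrite exprnP !expfzDr ?qvar_neq0.
Qed.

Lemma term_sigma (mu : wlat I) (y : term_index) :
  term (fun t => mu + alpha i0 a i *~ t%:Z) y =
  term (fun t => refl i0 a i (mu + alpha i0 a i *~ (m%:Z - t%:Z))) (sigma y).
Proof.
have hc := admissible_eps (admissible_tensor_of y).
rewrite /term weight_condL weight_condR tensor_of_sigma weight_srefl //.
rewrite (inj_eq (can_inj weight_reflK)); case: eqP => // wy.
rewrite exponentL exponentR tensor_of_sigma potential_srefl // string_shift_weight wy.
by rewrite ffunE -(crystal_phi_sub_eps crys i b); congr (qvar ^ _); ring.
Qed.

End Symmetry.

Theorem mainTheorem6 (I : finType) (i0 : I) (a : I -> I -> int)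
  (B : finType) (wt : B -> {ffun I -> int}) (e f : I -> B -> option B)
  (eps phi : I -> B -> nat) (H : B -> B -> int) :
  affine_cartan a ->
  is_crystal i0 a wt e f eps phi ->
  energy_function i0 e eps phi H ->
  forall (b : B) (i : I) (j : nat) (mu : wlat I),
  let m := phi i b in
  \sum_(t < m.+1)
     gopt qvar wt H j (kpow f i t b) (mu + alpha i0 a i *~ t%:Z)
       * qvar ^+ (t * j * (i == i0))
  = \sum_(t < m.+1)
     gopt qvar wt H j (kpow f i t b)
       (refl i0 a i (mu + alpha i0 a i *~ (m%:Z - t%:Z)))
       * qvar ^+ (t * j * (i == i0)).
Proof.
move=> [a_ii _ _ _ _] crys energy b i j mu m.
rewrite (sum_gopt_term H crys i b j (fun t => mu + alpha i0 a i *~ t%:Z)).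
rewrite (sum_gopt_term H crys i b j
  (fun t => refl i0 a i (mu + alpha i0 a i *~ (m%:Z - t%:Z)))).
rewrite [RHS](reindex_inj (can_inj (sigmaK crys (a_ii i)))).
by apply: eq_bigr => y _; rewrite (term_sigma crys energy (a_ii i)).
Qed.
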